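(* Let $G(z)=\sum_{n=0}^{\infty}\binom{3n}{n}\frac{2z^n}{n+1}$, $|z|<4/27$. Then \[ G(z)=\mathcal{B}_3(z)+\mathcal{B}_3(z)^2, \] where $\mathcal{B}_3(z)=\sum_{n\ge0}\binom{3n+1}{n}\frac{z^n}{3n+1}$, and $G$ satisfies the cubic equation \[ 2-z-(1+2z)G(z)+2zG(z)^2-z^2G(z)^3=0 . \]
   Context: $\mathcal{B}_3(z)=\sum_{n\ge0}\binom{3n+1}{n}\frac{z^n}{3n+1}$ denotes the generating function of the Fuss–Catalan numbers of order 3. It satisfies $\mathcal{B}_3(z)=1+z\mathcal{B}_3(z)^3$. *)

From HB Require Import structures.
From mathcomp Require Import all_boot all_order all_algebra.
Set Implicit Arguments. Unset Strict Implicit. Unset Printing Implicit Defensive.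
Import Order.TTheory GRing.Theory Num.Theory.
Local Open Scope ring_scope.

Definition fps := nat -> rat.

Definition fps_const (c : rat) : fps := fun n => if n is 0%N then c else 0.
Definition fps_z : fps := fun n => if n == 1%N then 1 else 0.

Definition fps_add (a b : fps) : fps := fun n => a n + b n.
Definition fps_opp (a : fps) : fps := fun n => - a n.
Definition fps_mul (a b : fps) : fps :=
  fun n => \sum_(i < n.+1) a i * b (n - i)%N.

Definition B3 : fps := fun n => ('C(3 * n + 1, n))%:R / (3 * n + 1)%:R.

Definition Gser : fps := fun n => ('C(3 * n, n))%:R * 2 / (n + 1)%:R.

(* By iterating Phi y := 1 + z y^3 from 0 we build a series Fix with
   Fix = 1 + z Fix^3; the (k+1)-st iterate is already correct below degree k+1.
   For any such fixed point y, the Euler operator theta = z d/dz is a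
   derivation, and differentiating the functional equation twice gives
   linear relations for theta y and theta^2 y with the factor
   u = 1 - 3 z y^2.  Pure ring identities (cofactors of y - 1 - z y^3) then
   show that u^3 times a hypergeometric differential operator applied to y,
   resp. to y + y^2, vanishes; since u has constant term 1 it cancels.
   Reading off coefficients gives first-order recurrences satisfied also by
   the closed forms B3 and Gser, so Fix = B3 and Gser = B3 + B3^2.  The cubic
   for Gser is a ring identity modulo the functional equation of B3. *)
From HB Require Import structures.
From mathcomp Require Import all_boot all_order all_algebra.
From mathcomp Require Import boolp.
From mathcomp Require Import ring lra zify.
Set Implicit Arguments.
Unset Strict Implicit.
Unset Printing Implicit Defensive.
Set Warnings "-notation-overridden -ambiguous-paths -redundant-canonical-projection".
Import Order.TTheory GRing.Theory Num.Theory.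
Local Open Scope ring_scope.

HB.instance Definition _ := gen_eqMixin fps.
HB.instance Definition _ := gen_choiceMixin fps.

Lemma fps_addA : associative fps_add.
Proof. by move=> a b c; apply/funext=> n; rewrite /fps_add addrA. Qed.

Lemma fps_addC : commutative fps_add.
Proof. by move=> a b; apply/funext=> n; rewrite /fps_add addrC. Qed.

Lemma fps_add0 : left_id (fps_const 0) fps_add.
Proof. by move=> a; apply/funext=> -[|n]; rewrite /fps_add add0r. Qed.

Lemma fps_addN : left_inverse (fps_const 0) fps_opp fps_add.
Proof. by move=> a; apply/funext=> -[|n]; rewrite /fps_add /fps_opp addNr. Qed.

HB.instance Definition _ :=
  GRing.isZmodule.Build fps fps_addA fps_addC fps_add0 fps_addN.

(* Truncation of a series to a polynomial of size at most N: the Cauchy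
   product of series agrees with the polynomial product below degree N. *)
Definition trunc (N : nat) (a : fps) : {poly rat} := \poly_(i < N) a i.

Lemma coef_trunc N a i : (i < N)%N -> (trunc N a)`_i = a i.
Proof. by move=> h; rewrite coef_poly h. Qed.

Lemma fps_mul_trunc N a b n :
  (n < N)%N -> fps_mul a b n = (trunc N a * trunc N b)`_n.
Proof.
move=> hn; rewrite coefM /fps_mul; apply: eq_bigr => i _.
have hi : (i <= n)%N by rewrite -ltnS.
by rewrite !coef_trunc //; apply: leq_ltn_trans hn; rewrite ?leq_subr.
Qed.

Lemma coefM_congr N (p q r : {poly rat}) n : (n < N)%N ->
  (forall j, (j < N)%N -> p`_j = q`_j) -> (p * r)`_n = (q * r)`_n.
Proof.
move=> hn h; rewrite !coefM; apply: eq_bigr => i _.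
by rewrite h //; apply: leq_ltn_trans hn; rewrite -ltnS.
Qed.

Lemma fps_mulA : associative fps_mul.
Proof.
move=> a b c; apply/funext=> n.
rewrite (fps_mul_trunc (N := n.+1)) // (fps_mul_trunc (N := n.+1) (fps_mul a b)) //.
have trunc_mul x y : forall j, (j < n.+1)%N ->
    (trunc n.+1 (fps_mul x y))`_j = (trunc n.+1 x * trunc n.+1 y)`_j.
  by move=> j hj; rewrite coef_trunc // (fps_mul_trunc (N := n.+1)).
rewrite [RHS](coefM_congr (trunc n.+1 c) (ltnSn n) (trunc_mul a b)).
rewrite [trunc _ a * _]mulrC (coefM_congr (trunc n.+1 a) (ltnSn n) (trunc_mul b c)).
by rewrite mulrC mulrA.
Qed.

Lemma fps_mulC : commutative fps_mul.
Proof. by move=> a b; apply/funext=> n; rewrite !(fps_mul_trunc (N := n.+1)) // mulrC. Qed.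

Lemma fps_mul1 : left_id (fps_const 1) fps_mul.
Proof.
move=> a; apply/funext=> n; rewrite /fps_mul big_ord_recl /= mul1r subn0.
by rewrite big1 ?addr0 // => i _; rewrite mul0r.
Qed.

Lemma fps_mulDl : left_distributive fps_mul fps_add.
Proof.
move=> a b c; apply/funext=> n; rewrite /fps_mul /fps_add -big_split /=.
by apply: eq_bigr => i _; rewrite mulrDl.
Qed.

Lemma fps_one_neq0 : fps_const 1 != fps_const 0.
Proof. by apply/eqP => /(congr1 (fun f => f 0%N)) /eqP; rewrite oner_eq0. Qed.

HB.instance Definition _ := GRing.Zmodule_isComNzRing.Build fps
  fps_mulA fps_mulC fps_mul1 fps_mulDl fps_one_neq0.

Notation z := fps_z.

Lemma fps_coefD (a b : fps) n : (a + b) n = a n + b n. Proof. by []. Qed.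
Lemma fps_coefN (a : fps) n : (- a) n = - a n. Proof. by []. Qed.
Lemma fps_coefB (a b : fps) n : (a - b) n = a n - b n. Proof. by []. Qed.
Lemma fps_coef0 n : (0 : fps) n = 0. Proof. by case: n. Qed.
Lemma fps_coef1 n : (1 : fps) n = if n is 0%N then 1 else 0. Proof. by []. Qed.

Lemma fps_coefM (a b : fps) n : (a * b) n = \sum_(i < n.+1) a i * b (n - i)%N.
Proof. by []. Qed.

Lemma fps_coefM0 (a b : fps) : (a * b) 0%N = a 0%N * b 0%N.
Proof. by rewrite fps_coefM big_ord1. Qed.

Lemma fps_coefMn (a : fps) k n : (a *+ k) n = a n *+ k.
Proof.
by elim: k => [|k IH]; rewrite ?mulr0n ?fps_coef0 // !mulrS fps_coefD IH.
Qed.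

Lemma fps_coef_natM (a : fps) k n : (k%:R * a) n = k%:R * a n.
Proof. by rewrite !mulr_natl fps_coefMn. Qed.

Lemma fps_coef_nat k n : (k%:R : fps) n = if n is 0%N then k%:R else 0.
Proof.
by rewrite -(mulr1 (k%:R : fps)) fps_coef_natM fps_coef1; case: n; rewrite ?mulr1 ?mulr0.
Qed.

Lemma fps_coef_zM0 (a : fps) : (z * a) 0%N = 0.
Proof. by rewrite fps_coefM0 mul0r. Qed.

Lemma fps_coef_zMS (a : fps) n : (z * a) n.+1 = a n.
Proof.
rewrite fps_coefM big_ord_recl big_ord_recl /= mul0r add0r mul1r subSS subn0.
by rewrite big1 ?addr0 // => i _; rewrite mul0r.
Qed.

Lemma fps_const2 : fps_const 2 = 2.
Proof. by apply/funext=> n; rewrite fps_coef_nat; case: n. Qed.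

Lemma fps_unit_cancel (u x : fps) : u 0%N = 1 -> u * x = 0 -> x = 0.
Proof.
move=> u0 ux0; apply/funext=> n; rewrite fps_coef0.
elim/ltn_ind: n => n IH; have := congr1 (fun f => f n) ux0.
rewrite fps_coefM big_ord_recl /= u0 mul1r subn0 fps_coef0.
by rewrite big1 ?addr0 // => i _; rewrite IH ?mulr0 // /bump /=; have := ltn_ord i; lia.
Qed.

(* The Euler operator theta = z d/dz, a derivation of fps. *)
Definition theta (a : fps) : fps := fun n => n%:R * a n.

Lemma thetaD a b : theta (a + b) = theta a + theta b.
Proof. by apply/funext=> n; rewrite /theta fps_coefD mulrDr. Qed.

Lemma theta_nat k : theta k%:R = 0.
Proof. by apply/funext=> -[|n]; rewrite /theta fps_coef_nat ?mul0r ?mulr0. Qed.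

Lemma theta_z : theta z = z.
Proof. by apply/funext=> n; rewrite /theta /fps_z; case: eqP => [->|]; rewrite ?mulr1 ?mulr0. Qed.

Lemma thetaM a b : theta (a * b) = theta a * b + a * theta b.
Proof.
apply/funext=> n; rewrite /theta fps_coefD !fps_coefM mulr_sumr -big_split /=.
apply: eq_bigr => i _; have hi : (i <= n)%N by rewrite -ltnS.
by rewrite natrB //; ring.
Qed.

(* Existence of a solution of y = 1 + z y^3, as the limit of the iterates
   of Phi starting from 0. *)
Definition Phi (y : fps) : fps := 1 + z * (y * y * y).

Definition agree k (a b : fps) := forall i, (i < k)%N -> a i = b i.

Lemma agreeM k a b c d : agree k a b -> agree k c d -> agree k (a * c) (b * d).
Proof.
move=> hab hcd i hi; rewrite !fps_coefM; apply: eq_bigr => j _.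
have hj : (j <= i)%N by rewrite -ltnS.
by rewrite hab ?hcd //; apply: leq_ltn_trans hi; rewrite ?leq_subr.
Qed.

Lemma agree_Phi k a b : agree k a b -> agree k.+1 (Phi a) (Phi b).
Proof.
move=> h [|i] hi; rewrite /Phi !fps_coefD ?fps_coef_zM0 ?fps_coef_zMS //.
by rewrite (agreeM (agreeM h h) h).
Qed.

Definition Phi_iter k := iter k Phi 0.

Lemma Phi_iter_agree k m : (k <= m)%N -> agree k (Phi_iter k) (Phi_iter m).
Proof.
elim: k m => [|k IH] [|m] hkm //; exact: agree_Phi (IH m hkm).
Qed.

Definition Fix : fps := fun n => Phi_iter n.+1 n.

Lemma Fix_fix : Fix = Phi Fix.
Proof.
have Fix_agree k : agree k Fix (Phi_iter k).
  by move=> i hi; rewrite /Fix (Phi_iter_agree hi).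
apply/funext=> n; rewrite (agree_Phi (Fix_agree n.+1)) //.
by rewrite /Fix (Phi_iter_agree (leqnSn n.+1)).
Qed.

(* In an abstract
   commutative ring, y plays a solution of y = 1 + z y^3 and a, b play
   theta y and theta^2 y, known only through the relations theta1, theta2
   obtained by differentiating that equation.  Multiplying by u^3 clears the
   denominators; each identity is then an explicit multiple of the cubic. *)
Section DifferentialAlgebra.
Variables (R : comNzRingType) (z y a b : R).
Hypothesis cubic : z * (y * y * y) - y + 1 = 0.
Let u := 1 - 3 * z * (y * y).
Hypothesis theta1 : u * a = y - 1.
Hypothesis theta2 : u * b = a + 3 * z * (y * y + 2 * y * a) * a.

Let u3a : u ^+ 3 * a = u ^+ 2 * (y - 1).
Proof. by rewrite -theta1; ring. Qed.

Let u3aa : u ^+ 3 * (a * a) = u * ((y - 1) * (y - 1)).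
Proof. by rewrite -theta1; ring. Qed.

Let u3b : u ^+ 3 * b =
  u * (y - 1) + 3 * z * (y * y) * u * (y - 1) + 6 * z * y * ((y - 1) * (y - 1)).
Proof.
transitivity (u ^+ 2 * (u * b)); first by ring.
by rewrite theta2 -theta1; ring.
Qed.

Lemma fuss_catalan_ode :
  u ^+ 3 * (4 * b + 2 * a - z * (27 * b + 27 * a + 6 * y)) = 0.
Proof.
transitivity ((4 - 27 * z) * (u ^+ 3 * b) + (2 - 27 * z) * (u ^+ 3 * a)
  - 6 * z * y * u ^+ 3); first by ring.
rewrite u3b u3a; transitivity ((-6 + 54 * z + 18 * z * y - 18 * z * (y * y)
  - 162 * (z * z) * y + 162 * (z * z * z) * (y * y * y * y))
  * (z * (y * y * y) - y + 1)); first by rewrite /u; ring.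
by rewrite cubic mulr0.
Qed.

(* Differential operator annihilating y + y^2, written with the theta
   derivatives of y + y^2 expanded by the Leibniz rule. *)
Lemma square_sum_ode :
  let g := y + y * y in
  let g1 := a + (a * y + y * a) in
  let g2 := b + (b * y + a * a + (a * a + y * b)) in
  u ^+ 3 * (4 * g2 + 2 * g1 - 2 * g + 4 - z * (27 * g2 + 27 * g1 + 6 * g)) = 0.
Proof.
move=> g g1 g2.
transitivity ((4 - 27 * z) * ((1 + 2 * y) * (u ^+ 3 * b) + 2 * (u ^+ 3 * (a * a)))
  + (2 - 27 * z) * (1 + 2 * y) * (u ^+ 3 * a)
  + u ^+ 3 * (4 - (2 + 6 * z) * (y + y * y))); first by rewrite /g /g1 /g2; ring.
rewrite u3b u3aa u3a; transitivity ((6 - 18 * y + 180 * z * y - 36 * z * y ^+ 2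
  - 36 * z * y ^+ 3 - 162 * z ^+ 2 * y - 162 * z ^+ 2 * y ^+ 2
  - 108 * z ^+ 2 * y ^+ 3 + 54 * z ^+ 2 * y ^+ 4 + 54 * z ^+ 2 * y ^+ 5
  + 162 * z ^+ 3 * y ^+ 4 + 162 * z ^+ 3 * y ^+ 5)
  * (z * (y * y * y) - y + 1)); first by rewrite /u; ring.
by rewrite cubic mulr0.
Qed.

End DifferentialAlgebra.

Lemma square_sum_cubic (R : comNzRingType) (z y : R) :
  z * (y * y * y) - y + 1 = 0 ->
  let g := y + y * y in
  (2 - z - (1 + 2 * z) * g) + (2 * z * (g * g) - z * z * (g * (g * g))) = 0.
Proof.
move=> cubic g; transitivity ((2 + y - z - 3 * z * y - 3 * z * y ^+ 2
  - z * y ^+ 3) * (z * (y * y * y) - y + 1)); first by rewrite /g; ring.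
by rewrite cubic mulr0.
Qed.

Section FixedPoint.
Variable y : fps.
Hypothesis y_fix : y = Phi y.

Lemma fix_cubic : z * (y * y * y) - y + 1 = 0.
Proof. by rewrite [X in _ - X + _]y_fix /Phi; ring. Qed.

Lemma fix_coef0 : y 0%N = 1.
Proof. by rewrite y_fix /Phi fps_coefD fps_coef_zM0 addr0. Qed.

Let theta_fix1 : theta y = z * (y * y * y) + 3 * z * (y * y) * theta y.
Proof. by rewrite {1}y_fix /Phi thetaD (theta_nat 1) !thetaM theta_z; ring. Qed.

Let theta_fix2 : theta (theta y) = z * (y * y * y) + 6 * z * (y * y) * theta y
  + 6 * z * y * theta y * theta y + 3 * z * (y * y) * theta (theta y).
Proof. by rewrite {1}theta_fix1 !(thetaD, thetaM, theta_z, theta_nat); ring. Qed.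

(* Solving the differentiated equations for theta y and theta^2 y requires
   dividing by u; we only multiply by it, and u has constant term 1. *)
Let u : fps := 1 - 3 * z * (y * y).

Let u_theta1 : u * theta y = y - 1.
Proof.
transitivity (theta y - 3 * z * (y * y) * theta y); first by rewrite /u; ring.
rewrite {1}theta_fix1; apply/eqP; rewrite -subr_eq0; apply/eqP.
by rewrite -fix_cubic; ring.
Qed.

Let u_theta2 :
  u * theta (theta y) = theta y + 3 * z * (y * y + 2 * y * theta y) * theta y.
Proof.
transitivity (theta (theta y) - 3 * z * (y * y) * theta (theta y)).
  by rewrite /u; ring.
rewrite {1}theta_fix2; apply/eqP; rewrite -subr_eq0; apply/eqP.
transitivity (z * (y * y * y) + 3 * z * (y * y) * theta y - theta y); first by ring.
by rewrite -theta_fix1 subrr.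
Qed.

Let u3_coef0 : (u ^+ 3) 0%N = 1.
Proof.
by rewrite /u !exprS expr0 !fps_coefM0 fps_coefB fps_coef1 !fps_coefM0 /=
  mulr0 mul0r subr0 !mulr1.
Qed.

(* Coefficient m+1 of the operator of fuss_catalan_ode applied to y. *)
Lemma fix_recurrence m :
  (2 * m.+1 * (2 * m + 3))%:R * y m.+1 = (3 * (3 * m + 1) * (3 * m + 2))%:R * y m.
Proof.
have := fuss_catalan_ode fix_cubic u_theta1 u_theta2.
move=> /(fps_unit_cancel u3_coef0) /(congr1 (fun f => f m.+1)).
rewrite fps_coef0 fps_coefB !fps_coefD !fps_coef_natM fps_coef_zMS.
rewrite !fps_coefD !fps_coef_natM /theta => h.
apply/eqP; rewrite -subr_eq0 -h; apply/eqP.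
by rewrite !(natrM, natrD, mulrSr); ring.
Qed.

Let square_sum_ode_fps :
  let g := y + y * y in
  4 * theta (theta g) + 2 * theta g - 2 * g + 4
  - z * (27 * theta (theta g) + 27 * theta g + 6 * g) = 0.
Proof.
apply: (fps_unit_cancel u3_coef0); rewrite !(thetaD, thetaM).
exact: (square_sum_ode fix_cubic u_theta1 u_theta2).
Qed.

(* Coefficients 0 and m+1 of the operator annihilating y + y^2. *)
Lemma square_sum_coef0 : (y + y * y) 0%N = 2.
Proof.
have := congr1 (fun f => f 0%N) square_sum_ode_fps.
rewrite fps_coef0 fps_coefB !fps_coefD fps_coefN !fps_coef_natM fps_coef_zM0.
rewrite fps_coef_nat /theta /= !mul0r => h.
apply/eqP; rewrite -subr_eq0; apply/eqP; apply: (mulfI (_ : (-2 : rat) != 0)) => //.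
by rewrite mulr0 -h !fps_coefD; ring.
Qed.

Lemma square_sum_recurrence m :
  (2 * (2 * m + 1) * (m + 2))%:R * (y + y * y) m.+1
  = (3 * (3 * m + 1) * (3 * m + 2))%:R * (y + y * y) m.
Proof.
have := congr1 (fun f => f m.+1) square_sum_ode_fps.
rewrite fps_coef0 fps_coefB !fps_coefD fps_coefN !fps_coef_natM fps_coef_zMS.
rewrite fps_coef_nat !fps_coefD !fps_coef_natM /theta => h.
apply/eqP; rewrite -subr_eq0 -h; apply/eqP.
by rewrite !fps_coefD !(natrM, natrD, mulrSr); ring.
Qed.

End FixedPoint.

Lemma fact_neq0 n : (n`!%:R : rat) != 0.
Proof. by rewrite pnatr_eq0 -lt0n fact_gt0. Qed.

Lemma binomial_fact n k : (k <= n)%N ->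
  ('C(n, k))%:R = n`!%:R / (k`!%:R * (n - k)`!%:R) :> rat.
Proof.
by move=> h; rewrite -(bin_fact h) !natrM mulfK // mulf_neq0 // fact_neq0.
Qed.

Lemma B3_0 : B3 0 = 1.
Proof. by rewrite /B3 /= bin0 divr1. Qed.

Lemma B3_recurrence m :
  (2 * m.+1 * (2 * m + 3))%:R * B3 m.+1 = (3 * (3 * m + 1) * (3 * m + 2))%:R * B3 m.
Proof.
rewrite /B3 !binomial_fact; try lia.
have -> : (3 * m.+1 + 1 - m.+1 = (2 * m + 1).+2)%N by lia.
have -> : (3 * m + 1 - m = 2 * m + 1)%N by lia.
have -> : (3 * m.+1 + 1 = (3 * m + 1).+3)%N by lia.
rewrite !factS; have := fact_neq0 m; have := fact_neq0 (2 * m + 1).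
rewrite !(natrD, natrM, mulrSr) /= => h1 h2.
have hm : 0 <= (m%:R : rat) by apply: ler0n.
field; rewrite h1 h2 /=.
by repeat (apply/andP; split); apply: lt0r_neq0; lra.
Qed.

Lemma Gser_0 : Gser 0 = 2.
Proof. by rewrite /Gser /= bin0 mul1r divr1. Qed.

Lemma Gser_recurrence m :
  (2 * (2 * m + 1) * (m + 2))%:R * Gser m.+1
  = (3 * (3 * m + 1) * (3 * m + 2))%:R * Gser m.
Proof.
rewrite /Gser !binomial_fact; try lia.
have -> : (3 * m.+1 - m.+1 = (2 * m).+2)%N by lia.
have -> : (3 * m - m = 2 * m)%N by lia.
have -> : (3 * m.+1 = (3 * m).+3)%N by lia.
rewrite !factS; have := fact_neq0 (3 * m); have := fact_neq0 m.
have := fact_neq0 (2 * m); rewrite !(natrD, natrM, mulrSr) /= => h1 h2 h3.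
have hm : 0 <= (m%:R : rat) by apply: ler0n.
field; rewrite ?h1 ?h2 ?h3 /=.
by repeat (apply/andP; split); apply: lt0r_neq0; lra.
Qed.

Lemma recurrence_unique (R : idomainType) (p q : nat -> R) (a b : nat -> R) :
  (forall m, p m != 0) -> a 0%N = b 0%N ->
  (forall m, p m * a m.+1 = q m * a m) ->
  (forall m, p m * b m.+1 = q m * b m) -> a = b.
Proof.
move=> hp h0 ha hb; apply/funext; elim=> // n IH.
by apply: (mulfI (hp n)); rewrite ha hb IH.
Qed.

Lemma Fix_B3 : Fix = B3.
Proof.
apply: (recurrence_unique (p := fun m => (2 * m.+1 * (2 * m + 3))%:R)) => //.
- by move=> m; rewrite pnatr_eq0; lia.
- by rewrite (fix_coef0 Fix_fix) B3_0.
- exact: (fix_recurrence Fix_fix).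
- exact: B3_recurrence.
Qed.

Lemma Gser_square_sum : Gser = B3 + B3 * B3.
Proof.
rewrite -Fix_B3.
apply: (recurrence_unique (p := fun m => (2 * (2 * m + 1) * (m + 2))%:R)) => //.
- by move=> m; rewrite pnatr_eq0; lia.
- by rewrite (square_sum_coef0 Fix_fix) Gser_0.
- exact: Gser_recurrence.
- exact: (square_sum_recurrence Fix_fix).
Qed.

Theorem mainTheorem2 :
  (forall n : nat, Gser n = fps_add B3 (fps_mul B3 B3) n) /\
  (forall n : nat,
     fps_add
       (fps_add
          (fps_add (fps_const 2) (fps_opp fps_z))
          (fps_opp (fps_mul (fps_add (fps_const 1) (fps_mul (fps_const 2) fps_z)) Gser)))
       (fps_add
          (fps_mul (fps_mul (fps_const 2) fps_z) (fps_mul Gser Gser))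
          (fps_opp (fps_mul (fps_mul fps_z fps_z) (fps_mul Gser (fps_mul Gser Gser)))))
       n = 0).
Proof.
split; first by move=> n; rewrite Gser_square_sum.
have cubic := square_sum_cubic (fix_cubic Fix_fix).
rewrite Fix_B3 -Gser_square_sum -fps_const2 in cubic.
by move=> n; rewrite -(fps_coef0 n) -cubic.
Qed.
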